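(* Let $\mathfrak g=\mathfrak k+_\rho V$ be the semidirect sum of a finite-dimensional real Lie algebra $\mathfrak k$ and a commutative ideal $V$ via a representation $\rho:\mathfrak k\to\operatorname{End}(V)$. Let $f,g$ be polynomials on $\mathfrak g^*$ each satisfying $F(M,v)=F(M+L,v)$ for all $(M,v)\in\mathfrak g^*$ and $L\in\mathrm{St}_{\rho^*}(v)^\perp$, so that $f(M,v)=f_v(\pi_v(M))$ and $g(M,v)=g_v(\pi_v(M))$ for functions $f_v,g_v$ on $\mathrm{St}_{\rho^*}(v)^*$. Then $$\{f,g\}(M,v)=\{f_v,g_v\}_{\mathrm{St}_{\rho^*}(v)}(\pi_v(M)),$$ where the left side is the Lie–Poisson bracket of $\mathfrak g^*$ and the right side is the Lie–Poisson bracket on $\mathrm{St}_{\rho^*}(v)^*$.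
   Context: Elements of $\mathfrak g^*=\mathfrak k^*\oplus V^*$ are pairs $(M,v)$. $\rho^*:\mathfrak k\to\operatorname{End}(V^* )$ is the dual representation, $\mathrm{St}_{\rho^*}(v)=\{X\in\mathfrak k\mid\rho^*(X)v=0\}$, $\mathrm{St}_{\rho^*}(v)^\perp\subset\mathfrak k^*$ its annihilator, and $\pi_v:\mathfrak k^*\to\mathrm{St}_{\rho^*}(v)^*$ the restriction map. The Lie–Poisson bracket on $\mathfrak l^*$ for a Lie algebra $\mathfrak l$ is $\{f,g\}(x)=\langle x,[df(x),dg(x)]\rangle$. *)

From HB Require Import structures.
From mathcomp Require Import all_boot all_order all_algebra.
From mathcomp Require Import all_classical all_reals all_analysis.
Set Implicit Arguments. Unset Strict Implicit. Unset Printing Implicit Defensive.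
Import Order.TTheory GRing.Theory Num.Theory.
Local Open Scope ring_scope.

(* Coordinates: a real vector space of dimension N is 'rV[R]_N; its dual is
   also 'rV[R]_N via the standard pairing. *)
Definition pair (R : realType) (N : nat) (x y : 'rV[R]_N) : R :=
  \sum_(i < N) x 0 i * y 0 i.

Definition unitrow (R : realType) (N : nat) (i : 'I_N) : 'rV[R]_N :=
  delta_mx 0 i.

Inductive polyfun (R : realType) (N : nat) : ('rV[R]_N -> R) -> Prop :=
| pf_const (c : R) : polyfun (fun _ => c)
| pf_coord (i : 'I_N) : polyfun (fun x => x 0 i)
| pf_add f g : polyfun f -> polyfun g -> polyfun (fun x => f x + g x)
| pf_mul f g : polyfun f -> polyfun g -> polyfun (fun x => f x * g x).

(* Differential of f : l^* -> R at x, as an element of l (= l^{**}),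
   via partial derivatives. *)
Definition grad (R : realType) (N : nat) (f : 'rV[R]_N -> R) (x : 'rV[R]_N)
  : 'rV[R]_N :=
  \row_i (derive1 (fun t : R => f (x + t *: unitrow R i)) 0).

Definition LP (R : realType) (N : nat) (br : 'rV[R]_N -> 'rV[R]_N -> 'rV[R]_N)
  (f g : 'rV[R]_N -> R) (x : 'rV[R]_N) : R :=
  pair x (br (grad f x) (grad g x)).

Definition is_lie_bracket (R : realType) (N : nat)
  (br : 'rV[R]_N -> 'rV[R]_N -> 'rV[R]_N) : Prop :=
  [/\ forall (a : R) X Y Z, br (a *: X + Y) Z = a *: br X Z + br Y Z,
      forall X, br X X = 0 &
      forall X Y Z, br X (br Y Z) + br Y (br Z X) + br Z (br X Y) = 0].

Definition is_rep (R : realType) (n m : nat)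
  (br : 'rV[R]_n -> 'rV[R]_n -> 'rV[R]_n)
  (rho : 'rV[R]_n -> 'rV[R]_m -> 'rV[R]_m) : Prop :=
  [/\ forall (a : R) X Y u, rho (a *: X + Y) u = a *: rho X u + rho Y u,
      forall X (a : R) u w, rho X (a *: u + w) = a *: rho X u + rho X w &
      forall X Y u, rho (br X Y) u = rho X (rho Y u) - rho Y (rho X u)].

Definition sdbr (R : realType) (n m : nat)
  (br : 'rV[R]_n -> 'rV[R]_n -> 'rV[R]_n)
  (rho : 'rV[R]_n -> 'rV[R]_m -> 'rV[R]_m)
  (X Y : 'rV[R]_(n + m)) : 'rV[R]_(n + m) :=
  row_mx (br (lsubmx X) (lsubmx Y))
         (rho (lsubmx X) (rsubmx Y) - rho (lsubmx Y) (rsubmx X)).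

Definition dualrho (R : realType) (n m : nat)
  (rho : 'rV[R]_n -> 'rV[R]_m -> 'rV[R]_m) (X : 'rV[R]_n) (v : 'rV[R]_m)
  : 'rV[R]_m :=
  \row_j (- pair v (rho X (unitrow R j))).

Definition St (R : realType) (n m : nat)
  (rho : 'rV[R]_n -> 'rV[R]_m -> 'rV[R]_m) (v : 'rV[R]_m) (X : 'rV[R]_n)
  : Prop := dualrho rho X v = 0.

Definition StPerp (R : realType) (n m : nat)
  (rho : 'rV[R]_n -> 'rV[R]_m -> 'rV[R]_m) (v : 'rV[R]_m) (L : 'rV[R]_n)
  : Prop := forall X, St rho v X -> pair L X = 0.

(* A basis of St(v): the rows of B : 'M_(s,n).  Via B, St(v) = R^s
   (c |-> c *m B) and St(v)^* = R^s with the standard pairing. *)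
Definition is_St_basis (R : realType) (n m s : nat)
  (rho : 'rV[R]_n -> 'rV[R]_m -> 'rV[R]_m) (v : 'rV[R]_m) (B : 'M[R]_(s, n))
  : Prop := row_free B /\ forall X, St rho v X <-> (X <= B)%MS.

(* Restriction map pi_v : k^* -> St(v)^*, in the coordinates given by B. *)
Definition piB (R : realType) (n s : nat) (B : 'M[R]_(s, n)) (M : 'rV[R]_n)
  : 'rV[R]_s := \row_i pair M (row i B).

Definition brS (R : realType) (n s : nat)
  (br : 'rV[R]_n -> 'rV[R]_n -> 'rV[R]_n) (B : 'M[R]_(s, n))
  (c d : 'rV[R]_s) : 'rV[R]_s :=
  br (c *m B) (d *m B) *m pinvmx B.

From HB Require Import structures.
From mathcomp Require Import all_boot all_order all_algebra.
From mathcomp Require Import all_classical all_reals all_analysis.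
Import Order.TTheory GRing.Theory Num.Theory.
Local Open Scope ring_scope.
Set Implicit Arguments. Unset Strict Implicit.

(* Invariance under St(v)^perp forces the k-part of the differential of f at
   (M, v) to lie in St(v), the annihilator of St(v)^perp.  The V-parts of the
   differentials then pair to zero with rho^*(St(v)) v = 0, so the Lie-Poisson
   bracket of g^* at (M, v) reduces to <M, [df, dg]>; and since St(v) is a subalgebra, this
   is the Lie-Poisson bracket of St(v)^* evaluated at the restriction of M. *)

Section Pairing.
Variables (R : realType) (N : nat).
Implicit Types x y z : 'rV[R]_N.

Lemma pairE x y : pair x y = (x *m y^T) 0 0.
Proof. by rewrite /pair !mxE; apply: eq_bigr => i _; rewrite mxE. Qed.

Lemma pairC x y : pair x y = pair y x.
Proof. by apply: eq_bigr => j _; rewrite mulrC. Qed.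

Lemma pairD x y z : pair x (y + z) = pair x y + pair x z.
Proof. by rewrite /pair -big_split; apply: eq_bigr => j _; rewrite mxE mulrDr. Qed.

Lemma pairZ x y (a : R) : pair x (a *: y) = a * pair x y.
Proof. by rewrite /pair mulr_sumr; apply: eq_bigr => j _; rewrite mxE mulrCA. Qed.

Lemma pairB x y z : pair x (y - z) = pair x y - pair x z.
Proof. by rewrite pairD -scaleN1r pairZ mulN1r. Qed.

Lemma pairx0 x : pair x 0 = 0.
Proof. by rewrite /pair big1 // => i _; rewrite mxE mulr0. Qed.

Lemma pair_unitrow x i : pair x (unitrow R i) = x 0 i.
Proof.
rewrite /pair (bigD1 i) //= big1 => [|j ji].
  by rewrite /unitrow mxE !eqxx /= mulr1 addr0.
by rewrite /unitrow mxE eqxx /= (negbTE ji) mulr0.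
Qed.

End Pairing.

Lemma pair_mulmx (R : realType) N s (x : 'rV[R]_N) (c : 'rV[R]_s) (B : 'M[R]_(s, N)) :
  pair x (c *m B) = pair (x *m B^T) c.
Proof. by rewrite !pairE trmx_mul mulmxA. Qed.

Lemma piBE (R : realType) N s (B : 'M[R]_(s, N)) (x : 'rV[R]_N) : piB B x = x *m B^T.
Proof.
by apply/rowP => j; rewrite !mxE /pair; apply: eq_bigr => k _; rewrite !mxE.
Qed.

Lemma pair_row_mx (R : realType) n m (a c : 'rV[R]_n) (b d : 'rV[R]_m) :
  pair (row_mx a b) (row_mx c d) = pair a c + pair b d.
Proof.
by rewrite /pair big_split_ord; congr (_ + _); apply: eq_bigr => i _;
  rewrite ?row_mxEl ?row_mxEr.
Qed.

Section Gradient.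
Variables (R : realType) (N : nat).

Definition has_gradient (P : 'rV[R]_N -> R) (x d : 'rV[R]_N) :=
  forall w, is_derive (0 : R) (1 : R) (fun t : R => P (x + t *: w)) (pair w d).

Lemma polyfun_has_gradient (P : 'rV[R]_N -> R) x :
  polyfun P -> exists d, has_gradient P x d.
Proof.
move=> PP; elim: PP x => [c|i|f g _ IHf _ IHg|f g _ IHf _ IHg] x.
- by exists 0 => w; rewrite pairx0; exact: is_derive_cst.
- exists (unitrow R i) => w; rewrite pair_unitrow.
  have -> : (fun t : R => (x + t *: w) 0 i) =
            cst (x 0 i) + (fun t => t) * cst (w 0 i).
    by apply/funext => t; rewrite !mxE.
  by apply: is_derive_eq; rewrite scaler0 !add0r; exact: mulr1.
- have [df Hf] := IHf x; have [dg Hg] := IHg x.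
  by exists (df + dg) => w; rewrite pairD; exact: is_deriveD.
- have [df Hf] := IHf x; have [dg Hg] := IHg x.
  exists (f x *: dg + g x *: df) => w.
  have := is_deriveM (Hf w) (Hg w); rewrite /= scale0r addr0 => Hfg.
  by apply: is_derive_eq; rewrite pairD !pairZ.
Qed.

Lemma is_derive0_unique (h : R -> R) a b :
  is_derive (0 : R) (1 : R) h a -> is_derive (0 : R) (1 : R) h b -> a = b.
Proof. by case=> _ <-; case=> _ <-. Qed.

Lemma derive1_is_derive0 (h : R -> R) a :
  is_derive (0 : R) (1 : R) h a -> derive1 h 0 = a.
Proof. by rewrite derive1E => -[_ <-]. Qed.

Lemma gradE (P : 'rV[R]_N -> R) x d : has_gradient P x d -> grad P x = d.
Proof.
move=> Pd; apply/rowP => i.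
by rewrite mxE (derive1_is_derive0 (Pd _)) pairC pair_unitrow.
Qed.

End Gradient.

Lemma has_gradient_lsubmx (R : realType) n m (f : 'rV[R]_n -> 'rV[R]_m -> R)
    (M : 'rV[R]_n) (v : 'rV[R]_m) (d : 'rV[R]_(n + m)) :
  has_gradient (fun x => f (lsubmx x) (rsubmx x)) (row_mx M v) d ->
  has_gradient (f^~ v) M (lsubmx d).
Proof.
move=> fd a; have := fd (row_mx a 0).
rewrite -{1}(hsubmxK d) pair_row_mx [pair 0 _]pairC pairx0 addr0.
congr is_derive; apply/funext => t.
by rewrite scale_row_mx scaler0 add_row_mx addr0 row_mxKl row_mxKr.
Qed.

Lemma annihilator_submx (R : realType) n s (B : 'M[R]_(s, n)) (X : 'rV[R]_n) :
  (forall L : 'rV_n, L *m B^T = 0 -> pair L X = 0) -> (X <= B)%MS.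
Proof.
move=> XperpB; set K := kermx B^T.
have KB : K *m B^T = 0 := mulmx_ker _.
have XK : (X <= kermx K^T)%MS.
  apply/sub_kermxP/rowP => i; rewrite !mxE.
  rewrite -[RHS](XperpB (row i K)); last by rewrite -row_mul KB row0.
  by apply: eq_bigr => j _; rewrite !mxE mulrC.
have BK : (B <= kermx K^T)%MS.
  by apply/sub_kermxP; rewrite -[B]trmxK -trmx_mul KB trmx0.
have rkK : \rank (kermx K^T) = \rank B.
  by rewrite mxrank_ker mxrank_tr /K mxrank_ker mxrank_tr subKn // rank_leq_col.
have /esym KB_sub := (mxrank_leqif_sup BK).2; rewrite rkK eqxx in KB_sub.
exact: submx_trans XK KB_sub.
Qed.

Section Stabilizer.
Variables (R : realType) (n m : nat).
Variables (br : 'rV[R]_n -> 'rV[R]_n -> 'rV[R]_n).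
Variables (rho : 'rV[R]_n -> 'rV[R]_m -> 'rV[R]_m) (v : 'rV[R]_m).
Hypothesis rho_rep : is_rep br rho.

Lemma St_pair_rho X u : St rho v X -> pair v (rho X u) = 0.
Proof.
have [_ rhoX_lin _] := rho_rep.
move=> /rowP Xv; rewrite (row_sum_delta u).
have rhoX0 : rho X 0 = 0.
  by have := rhoX_lin X (-1) 0 0; rewrite scaler0 addr0 scaleN1r addNr.
elim/big_ind: _ => [|a b Ha Hb|j _].
- by rewrite rhoX0 pairx0.
- by have := rhoX_lin X 1 a b; rewrite !scale1r => ->; rewrite pairD Ha Hb addr0.
- have := rhoX_lin X (u 0 j) 'e_j 0; rewrite !addr0 rhoX0 addr0 => ->.
  by have /eqP := Xv j; rewrite !mxE oppr_eq0 pairZ => /eqP ->; rewrite mulr0.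
Qed.

Lemma St_br X Y : St rho v X -> St rho v Y -> St rho v (br X Y).
Proof.
have [_ _ rho_br] := rho_rep.
move=> StX StY; apply/rowP => j.
by rewrite !mxE rho_br pairB !St_pair_rho // subrr oppr0.
Qed.

Lemma sdbr_pair_St M X Y a b : St rho v X -> St rho v Y ->
  pair (row_mx M v) (sdbr br rho (row_mx X a) (row_mx Y b)) = pair M (br X Y).
Proof.
move=> StX StY.
by rewrite /sdbr !row_mxKl !row_mxKr pair_row_mx pairB !St_pair_rho // subrr addr0.
Qed.

Variables (s : nat) (B : 'M[R]_(s, n)).
Hypothesis B_basis : is_St_basis rho v B.

Lemma StPerp_annihilator L : L *m B^T = 0 -> StPerp rho v L.
Proof.
have [_ StB] := B_basis.
by move=> LB X /StB XB; rewrite -(mulmxKpV XB) pair_mulmx LB pairC pairx0.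
Qed.

Lemma brS_pair M X Y : (X <= B)%MS -> (Y <= B)%MS ->
  pair (piB B M) (brS br B (X *m pinvmx B) (Y *m pinvmx B)) = pair M (br X Y).
Proof.
have [_ StB] := B_basis.
move=> XB YB; have brXY_B : (br X Y <= B)%MS by apply/StB/St_br; apply/StB.
by rewrite /brS !mulmxKpV // piBE -pair_mulmx mulmxKpV.
Qed.

Variables (f : 'rV[R]_n -> 'rV[R]_m -> R) (M dM : 'rV[R]_n).
Hypothesis f_inv : forall M L, StPerp rho v L -> f (M + L) v = f M v.
Hypothesis f_grad : has_gradient (f^~ v) M dM.

Lemma gradient_St : (dM <= B)%MS.
Proof.
apply: annihilator_submx => L LB; apply: (is_derive0_unique (f_grad L)).
have -> : (fun t : R => f (M + t *: L) v) = cst (f M v).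
  by apply/funext => t; apply/f_inv/StPerp_annihilator; rewrite -scalemxAl LB scaler0.
exact: is_derive_cst.
Qed.

Lemma grad_restriction (fv : 'rV[R]_s -> R) :
  (forall M', f M' v = fv (piB B M')) -> grad fv (piB B M) = dM *m pinvmx B.
Proof.
have [B_free _] := B_basis.
move=> f_fv; apply/rowP => i; rewrite mxE.
have BT_full : row_full B^T by rewrite /row_full mxrank_tr.
set w := unitrow R i *m pinvmx B^T.
have wB : w *m B^T = unitrow R i by rewrite mulmxKpV // submx_full.
have -> : (fun t : R => fv (piB B M + t *: unitrow R i)) =
          (fun t : R => f (M + t *: w) v).
  by apply/funext => t; rewrite f_fv !piBE mulmxDl -scalemxAl wB.
rewrite (derive1_is_derive0 (f_grad w)).
by rewrite -{1}(mulmxKpV gradient_St) pair_mulmx wB pairC pair_unitrow.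
Qed.

End Stabilizer.

Theorem lemma12 (R : realType) (n m : nat)
  (br : 'rV[R]_n -> 'rV[R]_n -> 'rV[R]_n)
  (rho : 'rV[R]_n -> 'rV[R]_m -> 'rV[R]_m)
  (f g : 'rV[R]_n -> 'rV[R]_m -> R) :
  is_lie_bracket br -> is_rep br rho ->
  polyfun (fun x : 'rV[R]_(n + m) => f (lsubmx x) (rsubmx x)) ->
  polyfun (fun x : 'rV[R]_(n + m) => g (lsubmx x) (rsubmx x)) ->
  (forall M v L, StPerp rho v L -> f (M + L) v = f M v) ->
  (forall M v L, StPerp rho v L -> g (M + L) v = g M v) ->
  forall (v : 'rV[R]_m) (s : nat) (B : 'M[R]_(s, n)),
  is_St_basis rho v B ->
  forall fv gv : 'rV[R]_s -> R,
  (forall M, f M v = fv (piB B M)) ->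
  (forall M, g M v = gv (piB B M)) ->
  forall M : 'rV[R]_n,
  LP (sdbr br rho) (fun x => f (lsubmx x) (rsubmx x))
     (fun x => g (lsubmx x) (rsubmx x)) (row_mx M v)
  = LP (brS br B) fv gv (piB B M).
Proof.
move=> _ rho_rep f_poly g_poly f_inv g_inv v s B B_basis fv gv f_fv g_gv M.
have [dF F_grad] := polyfun_has_gradient (row_mx M v) f_poly.
have [dG G_grad] := polyfun_has_gradient (row_mx M v) g_poly.
have f_grad := has_gradient_lsubmx F_grad.
have g_grad := has_gradient_lsubmx G_grad.
have dF_B := gradient_St B_basis (f_inv^~ v) f_grad.
have dG_B := gradient_St B_basis (g_inv^~ v) g_grad.
have [_ StB] := B_basis.
rewrite /LP (gradE F_grad) (gradE G_grad).
rewrite (grad_restriction B_basis (f_inv^~ v) f_grad f_fv).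
rewrite (grad_restriction B_basis (g_inv^~ v) g_grad g_gv).
rewrite (brS_pair rho_rep B_basis) //.
by rewrite -(hsubmxK dF) -(hsubmxK dG) sdbr_pair_St ?row_mxKl //; apply/StB.
Qed.
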